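(* Let $j\in[m]$, $r_j\in[0,1]$, and let $\mathbf{x}=(\mathbf{x}_1,\dots,\mathbf{x}_n)$ and $\mathbf{y}=(\mathbf{y}_1,\dots,\mathbf{y}_n)$ be Generalized Nash equilibria of $G^{(2)}$ with $\mathbf{x}_T^{(j)}=\mathbf{y}_T^{(j)}=r_j$. If $0<x_{ij}<y_{ij}$ for some $i\in[n]$, then $\mathbf{x}_i$ is of Type II or $\mathbf{y}_i$ is of Type II.
   Context: $G^{(2)}$ is a Fragile multi-CPR Game with $n\ge1$ players and $m\ge1$ CPRs: $[k]=\{1,\dots,k\}$, $C_m=\{(x_1,\dots,x_m)\in[0,1]^m:\sum_j x_j\le1\}$, $\mathcal{C}_n=\prod_{i\in[n]}C_m$, $\mathcal{C}_{-i}=\prod_{[n]\setminus\{i\}}C_m$. A profile is $\mathbf{x}=(\mathbf{x}_1,\dots,\mathbf{x}_n)$, $\mathbf{x}_i=(x_{i1},\dots,x_{im})$; write $\mathbf{x}=(\mathbf{x}_i,\mathbf{x}_{-i})$; $\mathbf{x}_T^{(j)}=\sum_i x_{ij}$, $\mathbf{x}_T^{j|i}=\sum_{\ell\ne i}x_{\ell j}$. Each CPR $j$ has return rate $\mathcal{R}_j(t)>1$ and failure probability $p_j(t)\in[0,1]$; each player $i$ has parameters $a_i,k_i$. $\mathcal{F}_{ij}(t)=(\mathcal{R}_j(t)-1)^{a_i}(1-p_j(t))-k_ip_j(t)$; utility $\mathcal{V}_i(\mathbf{x}_i;\mathbf{x}_{-i})=\sum_j x_{ij}^{a_i}\mathcal{F}_{ij}(\mathbf{x}_T^{(j)})$.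 Assumption: (1) $p_j(0)=0$, $p_j(t)=1$ for $t\ge1$; (2) $a_i\in(0,1]$, $k_i>0$; (3) each $\mathcal{F}_{ij}$ (continuous on $[0,1]$) has strictly negative first and second derivatives on $(0,1)$. $\omega_{ij}\in(0,1)$ is the unique zero of $\mathcal{F}_{ij}$ in $(0,1)$. $A(\mathbf{x}_{-i})=\{j:\mathbf{x}_T^{j|i}<\omega_{ij}\}$. $\vartheta_i(\mathbf{x}_{-i})=C_m\cap\big(\prod_{j\in A(\mathbf{x}_{-i})}[0,\omega_{ij}-\mathbf{x}_T^{j|i}]\times\prod_{j\notin A(\mathbf{x}_{-i})}\{0\}\big)$. A Generalized Nash equilibrium is $\mathbf{x}\in\mathcal{C}_n$ with, for all $i$, $\mathbf{x}_i\in\vartheta_i(\mathbf{x}_{-i})$ and $\mathcal{V}_i(\mathbf{x}_i;\mathbf{x}_{-i})\ge\mathcal{V}_i(\mathbf{z};\mathbf{x}_{-i})$ for all $\mathbf{z}\in\vartheta_i(\mathbf{x}_{-i})$. $\psi_{ij}(x;s)=x\,\mathcal{F}_{ij}'(x+s)+a_i\mathcal{F}_{ij}(x+s)$. For a GNE $\mathbf{x}$: $J_{\mathbf{x}_{-i}}=\{j\in A(\mathbf{x}_{-i}):x_{ij}\ne0\}$; $\mathbf{x}_i$ is of Type I if $\sum_{j\in J_{\mathbf{x}_{-i}}}x_{ij}<1$ and $\psi_{ij}(x_{ij};\mathbf{x}_T^{j|i})=0$ for all $j\in J_{\mathbf{x}_{-i}}$; of Type II if $\sum_{j\in J_{\mathbf{x}_{-i}}}x_{ij}=1$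 and there is $\kappa_0\ge0$ with $x_{ij}^{a_i-1}\psi_{ij}(x_{ij};\mathbf{x}_T^{j|i})=\kappa_0$ for all $j\in J_{\mathbf{x}_{-i}}$. *)

From HB Require Import structures.
From mathcomp Require Import all_boot all_order all_algebra.
From mathcomp Require Import all_classical all_reals all_analysis.
Set Implicit Arguments. Unset Strict Implicit. Unset Printing Implicit Defensive.
Import Order.TTheory GRing.Theory Num.Theory.
Import numFieldNormedType.Exports.
Local Open Scope classical_set_scope.
Local Open Scope ring_scope.

(* Data of a Fragile multi-CPR game G^(2) with n players and m CPRs. *)
Record cpr_game (R : realType) (n m : nat) := CprGame {
  ret : 'I_m -> R -> R;
  pfail : 'I_m -> R -> R;
  a_ : 'I_n -> R;
  k_ : 'I_n -> R;
  omega : 'I_n -> 'I_m -> R  (* omega_ij, the zero of F_ij in (0,1) *)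
}.

Section Game.
Variables (R : realType) (n m : nat) (G : cpr_game R n m).

Definition F (i : 'I_n) (j : 'I_m) (t : R) : R :=
  (ret G j t - 1) `^ (a_ G i) * (1 - pfail G j t) - k_ G i * pfail G j t.

(* Standing assumption of the paper, plus omega_ij being the zero of F_ij in (0,1)
   (uniqueness follows from strict monotonicity of F_ij). *)
Definition game_assumptions : Prop :=
  (forall j t, 1 < ret G j t) /\
  (forall j t, 0 <= pfail G j t <= 1) /\
  (forall j, pfail G j 0 = 0) /\
  (forall j t, 1 <= t -> pfail G j t = 1) /\
  (forall i, 0 < a_ G i <= 1) /\
  (forall i, 0 < k_ G i) /\
  (forall i j, {within `[0, 1], continuous (F i j)}) /\
  (forall i j t, 0 < t < 1 ->
     [/\ derivable (F i j) t 1, derive1 (F i j) t < 0,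
         derivable (derive1 (F i j)) t 1 & derive1 (derive1 (F i j)) t < 0]) /\
  (forall i j, 0 < omega G i j < 1 /\ F i j (omega G i j) = 0).

Definition profile := 'I_n -> 'I_m -> R.

Definition xT (x : profile) (j : 'I_m) : R := \sum_(l < n) x l j.
Definition xTo (x : profile) (i : 'I_n) (j : 'I_m) : R :=
  \sum_(l < n | l != i) x l j.

Definition inCm (z : 'I_m -> R) : Prop :=
  (forall j, 0 <= z j <= 1) /\ \sum_(j < m) z j <= 1.

Definition inA (x : profile) (i : 'I_n) (j : 'I_m) : bool := xTo x i j < omega G i j.

Definition theta (x : profile) (i : 'I_n) (z : 'I_m -> R) : Prop :=
  inCm z /\
  forall j, (inA x i j -> 0 <= z j <= omega G i j - xTo x i j) /\
            (~~ inA x i j -> z j = 0).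

Definition V (i : 'I_n) (z : 'I_m -> R) (x : profile) : R :=
  \sum_(j < m) z j `^ (a_ G i) * F i j (z j + xTo x i j).

Definition GNE (x : profile) : Prop :=
  (forall i, inCm (x i)) /\
  forall i, theta x i (x i) /\
            forall z, theta x i z -> V i z x <= V i (x i) x.

Definition psi (i : 'I_n) (j : 'I_m) (u s : R) : R :=
  u * derive1 (F i j) (u + s) + a_ G i * F i j (u + s).

Definition inJ (x : profile) (i : 'I_n) (j : 'I_m) : bool :=
  inA x i j && (x i j != 0).

Definition TypeI (x : profile) (i : 'I_n) : Prop :=
  \sum_(j < m | inJ x i j) x i j < 1 /\
  forall j, inJ x i j -> psi i j (x i j) (xTo x i j) = 0.

Definition TypeII (x : profile) (i : 'I_n) : Prop :=
  \sum_(j < m | inJ x i j) x i j = 1 /\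
  exists k0, 0 <= k0 /\
    forall j, inJ x i j -> x i j `^ (a_ G i - 1) * psi i j (x i j) (xTo x i j) = k0.

End Game.

From HB Require Import structures.
From mathcomp Require Import all_boot all_order all_algebra.
From mathcomp Require Import all_classical all_reals all_analysis.
From mathcomp Require Import ring lra.
Import Order.TTheory GRing.Theory Num.Theory.
Import numFieldNormedType.Exports.
Local Open Scope ring_scope.

(* Player i's payoff is a sum of terms u ^ a * F (u + s); its derivative in the
   k-th coordinate is the marginal payoff x_ik ^ (a - 1) * psi_ik.  At a GNE,
   moving mass away from a positive coordinate, towards an unsaturated one, or
   between two positive ones cannot increase the payoff, so the marginal payoffs
   of the positive coordinates are nonnegative and all equal (Type II when the
   budget is exhausted), and they vanish when the budget is slack.  In the
   latter case psi_ij = x_ij F'(r) + a F(r) = 0 with r = x_T^(j), and since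
   F'(r) < 0 this determines x_ij from r alone, so two such equilibria with the
   same r cannot have x_ij < y_ij. *)

Lemma is_derive_le0_at_right_max (R : realType) (f : R -> R) (c df d : R) :
  is_derive c 1 f df -> 0 < d -> (forall t, 0 < t < d -> f (c + t) <= f c) ->
  df <= 0.
Proof.
move=> [fdrv <-] d0 cmax.
rewrite ['D_1 f c]cvg_at_rightE; last exact: fdrv.
apply: limr_le.
  rewrite -(cvg_at_rightE (fun h : R => h^-1 *: ((f \o shift c) _ - f c))) //.
  apply: cvg_trans fdrv; apply: cvg_app.
  move=> A [e egt0 Ae]; exists e => // h he hgt0; apply: Ae => //.
  exact/lt0r_neq0.
near=> h; apply: mulr_ge0_le0.
  by rewrite invr_ge0; apply: ltW; near: h; exists 1 => /=.
rewrite subr_le0 [_%:A]mulr1 /= addrC; apply: cmax; apply/andP; split.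
  by near: h; exists 1 => /=.
near: h; exists d => //= h; rewrite /ball_ /= sub0r normrN => hd _.
exact: le_lt_trans (ler_norm h) hd.
Unshelve. all: by end_near. Qed.

Lemma is_derive_powR_mul_shift (R : realType) (f : R -> R) (a s u df : R) :
  0 < u -> is_derive (u + s) 1 f df ->
  is_derive u 1 (fun v => v `^ a * f (v + s))
    (u `^ (a - 1) * (u * df + a * f (u + s))).
Proof.
move=> u0 fder.
have fsder : is_derive u 1 (f \o shift s) (df * 1).
  by apply: is_derive1_comp; last exact: is_derive_shift.
apply: is_derive_eq; first exact: is_deriveM (is_derive1_powR a u0) fsder.
have -> : u `^ a = u `^ (a - 1) * u.
  by rewrite -[X in _ * X]powRr1 ?ltW // -powRD ?subrK // (gt_eqF u0) implybT.
rewrite /GRing.scale /=; ring.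
Qed.

Lemma sum_delta (R : pzRingType) (m : nat) (k : 'I_m) (w : 'I_m -> R) :
  \sum_(l < m) (l == k)%:R * w l = w k.
Proof.
rewrite (bigD1 k) //= eqxx mul1r big1 ?addr0 // => l /negbTE ->.
by rewrite mul0r.
Qed.

Lemma sum_delta1 (R : pzRingType) (m : nat) (k : 'I_m) :
  \sum_(l < m) (l == k)%:R = 1 :> R.
Proof. by rewrite (bigD1 k) //= eqxx big1 ?addr0 // => l /negbTE ->. Qed.

Lemma sum_perturb (R : pzRingType) (m : nat) (x c : 'I_m -> R) (t : R) :
  \sum_(k < m) (x k + c k * t) = \sum_(k < m) x k + (\sum_(k < m) c k) * t.
Proof. by rewrite big_split /= -mulr_suml. Qed.

Lemma xT_split {R : realType} {n m : nat} (x : profile R n m) i j :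
  xT x j = x i j + xTo x i j.
Proof. by rewrite /xT /xTo (bigD1 i). Qed.

Set Implicit Arguments.

Section Game.
Variables (R : realType) (n m : nat) (G : cpr_game R n m).
Hypothesis HG : game_assumptions G.

Lemma omega_itv i k : 0 < omega G i k < 1.
Proof. by case: HG => _ [_ [_ [_ [_ [_ [_ [_ /(_ i k) []]]]]]]]. Qed.

Lemma F_omega i k : F G i k (omega G i k) = 0.
Proof. by case: HG => _ [_ [_ [_ [_ [_ [_ [_ /(_ i k) []]]]]]]]. Qed.

Lemma is_derive_F i k (t : R) : 0 < t < 1 ->
  is_derive t 1 (F G i k) (derive1 (F G i k) t).
Proof.
move=> t01.
case: HG => _ [_ [_ [_ [_ [_ [_ [/(_ i k t t01) [fder _ _ _] _]]]]]]].
by apply: DeriveDef => //; rewrite derive1E.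
Qed.

Lemma derive1_F_lt0 i k (t : R) : 0 < t < 1 -> derive1 (F G i k) t < 0.
Proof.
by move=> t01; case: HG => _ [_ [_ [_ [_ [_ [_ [/(_ i k t t01) [] _]]]]]]].
Qed.

Section Equilibrium.
Variables (x : profile R n m) (i : 'I_n).
Hypothesis Hx : GNE G x.

Lemma GNE_ge0 l k : 0 <= x l k.
Proof. by case: Hx => /(_ l) [/(_ k) /andP[]]. Qed.

Lemma xTo_ge0 k : 0 <= xTo x i k.
Proof. by apply: sumr_ge0 => l _; exact: GNE_ge0. Qed.

Lemma GNE_sum_le1 : \sum_(k < m) x i k <= 1.
Proof. by case: Hx => /(_ i) []. Qed.

Lemma GNE_pos_le_slack k :
  0 < x i k -> inA G x i k /\ x i k <= omega G i k - xTo x i k.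
Proof.
move=> xk; case: Hx => _ /(_ i) [[_ /(_ k) [inAle notinA0]] _].
case: (boolP (inA G x i k)) => [kA|/notinA0 x0]; first by case/andP: (inAle kA).
by move: xk; rewrite x0 ltxx.
Qed.

Definition marginal_payoff k :=
  x i k `^ (a_ G i - 1) * psi G i k (x i k) (xTo x i k).

Definition perturb (c : 'I_m -> R) (t : R) : 'I_m -> R :=
  fun k => x i k + c k * t.

Lemma is_derive_payoff_perturb (c : 'I_m -> R) k : (c k != 0 -> 0 < x i k) ->
  is_derive (0 : R) 1
    (fun t : R => perturb c t k `^ a_ G i * F G i k (perturb c t k + xTo x i k))
    (c k * marginal_payoff k).
Proof.
rewrite /perturb => cx; have [->|/cx xk] := eqVneq (c k) 0.
  rewrite mul0r; under eq_fun do rewrite mul0r addr0.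
  exact: is_derive_cst.
have [_ xle] := GNE_pos_le_slack k xk.
case/andP: (omega_itv i k) => o0 o1; have s0 := xTo_ge0 k.
rewrite mulrC; apply: (@is_derive1_comp _
  (fun u => u `^ a_ G i * F G i k (u + xTo x i k)) (fun t => x i k + c k * t)).
- rewrite mulr0 addr0; apply: is_derive_powR_mul_shift => //.
  by apply: is_derive_F; apply/andP; split; lra.
- have := is_deriveD (is_derive_cst (x i k) (0 : R) 1)
                      (is_deriveZ (c k) (is_derive_id (0 : R) 1)).
  by rewrite add0r /GRing.scale /= mulr1.
Qed.

Lemma theta_perturb (c : 'I_m -> R) (t : R) :
  (forall k, c k != 0 -> 0 <= perturb c t k <= omega G i k - xTo x i k) ->
  \sum_(k < m) perturb c t k <= 1 -> theta G x i (perturb c t).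
Proof.
move=> cbound sum1; case: Hx => xC /(_ i) [[_ xth] _].
have cst_k k : c k = 0 -> perturb c t k = x i k.
  by rewrite /perturb => ->; rewrite mul0r addr0.
split; first split => // k.
  case: (eqVneq (c k) 0) => [/cst_k -> |/cbound /andP[-> le]].
    by case: (xC i) => /(_ k).
  case/andP: (omega_itv i k) => _ o1; have := xTo_ge0 k; lra.
move=> k; case: (eqVneq (c k) 0) => [/cst_k -> |/cbound /andP[ge le]].
  exact: xth.
split=> [_|]; first by rewrite ge le.
rewrite /inA -leNgt => kA.
by apply/eqP; rewrite eq_le ge andbT; lra.
Qed.

Lemma GNE_first_order (c : 'I_m -> R) (d : R) :
  (forall k, c k != 0 -> 0 < x i k) -> 0 < d ->
  (forall t, 0 < t < d -> theta G x i (perturb c t)) ->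
  \sum_(k < m) c k * marginal_payoff k <= 0.
Proof.
move=> cpos d0 feas.
have Vder : is_derive (0 : R) 1 (fun t : R => V G i (perturb c t) x)
                      (\sum_(k < m) c k * marginal_payoff k).
  have -> : (fun t : R => V G i (perturb c t) x) = \sum_(k < m)
      (fun t => perturb c t k `^ a_ G i * F G i k (perturb c t k + xTo x i k)).
    by apply/funext => t; rewrite fct_sumE.
  exact: is_derive_sum (fun k => @is_derive_payoff_perturb c k (cpos k)).
apply: is_derive_le0_at_right_max Vder d0 _ => t td.
have -> : perturb c 0 = x i by apply/funext => k; rewrite /perturb mulr0 addr0.
by rewrite add0r; case: Hx => _ /(_ i) [_ /(_ _ (feas t td))].
Qed.

Lemma marginal_payoff_ge0 k : 0 < x i k -> 0 <= marginal_payoff k.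
Proof.
move=> xk; have [_ xle] := GNE_pos_le_slack k xk.
have dir : \sum_(l < m) - (l == k)%:R * marginal_payoff l <= 0.
  apply: (@GNE_first_order _ (x i k)) => // [l|t /andP[t0 tx]].
    by have [->|_] := eqVneq l k; rewrite ?oppr0 ?eqxx.
  apply: theta_perturb => [l|].
    rewrite /perturb; have [->|] := eqVneq l k; rewrite ?oppr0 ?eqxx //.
    by rewrite mulr1n => _; lra.
  rewrite sum_perturb sumrN sum_delta1; have := GNE_sum_le1; lra.
by move: dir; under eq_bigr do rewrite mulNr; rewrite sumrN sum_delta oppr_le0.
Qed.

Lemma GNE_pos_lt_slack k : 0 < x i k -> x i k < omega G i k - xTo x i k.
Proof.
move=> xk; have [_ xle] := GNE_pos_le_slack k xk.
rewrite lt_neqAle xle andbT; apply/eqP => xeq.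
have := marginal_payoff_ge0 k xk.
apply/negP; rewrite -ltNge /marginal_payoff /psi.
have -> : x i k + xTo x i k = omega G i k by rewrite xeq subrK.
rewrite F_omega mulr0 addr0 pmulr_rlt0 ?powR_gt0 // pmulr_rlt0 //.
exact/derive1_F_lt0/omega_itv.
Qed.

Lemma marginal_payoff_le0 k :
  \sum_(l < m) x i l < 1 -> 0 < x i k -> marginal_payoff k <= 0.
Proof.
move=> slack xk; have xlt := GNE_pos_lt_slack k xk.
have dir : \sum_(l < m) (l == k)%:R * marginal_payoff l <= 0.
  apply: (@GNE_first_order _ (Num.min (omega G i k - xTo x i k - x i k)
                                       (1 - \sum_(l < m) x i l))).
  - by move=> l; have [->|_] := eqVneq l k; rewrite ?eqxx.
  - by rewrite lt_min !subr_gt0 xlt slack.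
  move=> t /andP[t0]; rewrite lt_min => /andP[t1 t2].
  apply: theta_perturb => [l|].
    rewrite /perturb; have [->|] := eqVneq l k; rewrite ?eqxx // mulr1n => _.
    have := GNE_ge0 i k; lra.
  by rewrite sum_perturb sum_delta1; lra.
by rewrite sum_delta in dir.
Qed.

Lemma marginal_payoff_le k l :
  0 < x i k -> 0 < x i l -> marginal_payoff k <= marginal_payoff l.
Proof.
have [-> //|lk] := eqVneq l k; move=> xk xl.
have xlt := GNE_pos_lt_slack k xk; have [_ xle] := GNE_pos_le_slack l xl.
have dir : \sum_(q < m) ((q == k)%:R - (q == l)%:R) * marginal_payoff q <= 0.
  apply: (@GNE_first_order _ (Num.min (omega G i k - xTo x i k - x i k)
                                       (x i l))).
  - move=> q; have [->|_] := eqVneq q k; first by [].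
    by have [->|_] := eqVneq q l; rewrite ?subrr ?eqxx.
  - by rewrite lt_min subr_gt0 xlt xl.
  move=> t /andP[t0]; rewrite lt_min => /andP[t1 t2].
  apply: theta_perturb => [q|].
    rewrite /perturb; have [->|qk] := eqVneq q k.
      rewrite [k == l]eq_sym (negbTE lk) mulr1n subr0 => _.
      have := GNE_ge0 i k; lra.
    have [->|_] := eqVneq q l; rewrite ?subrr ?eqxx // mulr1n sub0r => _; lra.
  rewrite sum_perturb sumrB !sum_delta1 subrr mul0r addr0; exact: GNE_sum_le1.
move: dir; under eq_bigr do rewrite mulrBl.
by rewrite sumrB !sum_delta subr_le0.
Qed.

Lemma inJE k : inJ G x i k = (0 < x i k).
Proof.
rewrite /inJ lt_def GNE_ge0 andbT.
have [_|xk] := eqVneq (x i k) 0; first by rewrite andbF.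
by rewrite andbT; case: (GNE_pos_le_slack k _) => //; rewrite lt_def xk GNE_ge0.
Qed.

Lemma TypeII_of_sum_eq1 : \sum_(k < m) x i k = 1 -> TypeII G x i.
Proof.
move=> tight; split.
  rewrite -tight big_mkcond /=; apply: eq_bigr => k _; rewrite inJE.
  by case: ltrP => // xk0; apply/eqP; rewrite eq_le xk0 GNE_ge0.
case: (pickP (fun k => 0 < x i k)) => [k0 xk0|none].
  exists (marginal_payoff k0); split; first exact: marginal_payoff_ge0.
  move=> k; rewrite inJE => xk; apply/eqP.
  by rewrite -/(marginal_payoff k) eq_le !marginal_payoff_le.
by exists 0; split => // k; rewrite inJE none.
Qed.

Lemma xT_itv k : 0 < x i k -> 0 < xT x k < 1.
Proof.
move=> xk; have [_ xle] := GNE_pos_le_slack k xk.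
case/andP: (omega_itv i k) => _ o1; have := xTo_ge0 k.
rewrite (xT_split x i); lra.
Qed.

Lemma psi_eq0_of_slack k : \sum_(l < m) x i l < 1 -> 0 < x i k ->
  x i k * derive1 (F G i k) (xT x k) + a_ G i * F G i k (xT x k) = 0.
Proof.
move=> slack xk; rewrite (xT_split x i).
have : marginal_payoff k = 0.
  by apply/eqP; rewrite eq_le marginal_payoff_le0 // marginal_payoff_ge0.
by move/eqP; rewrite mulf_eq0 (gt_eqF (powR_gt0 _ xk)) => /eqP.
Qed.
End Equilibrium.
End Game.

Unset Implicit Arguments.

Theorem lemma11 (R : realType) (n m : nat) (G : cpr_game R n m)
  (HG : game_assumptions G) (j : 'I_m) (r : R) (hr : 0 <= r <= 1)
  (x y : profile R n m) (Hx : GNE G x) (Hy : GNE G y)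
  (hxr : xT x j = r) (hyr : xT y j = r)
  (i : 'I_n) (hi : 0 < x i j < y i j) :
  TypeII G x i \/ TypeII G y i.
Proof.
have [xslack|xtight] := ltrP (\sum_(l < m) x i l) 1; last first.
  left; apply: (TypeII_of_sum_eq1 HG i Hx).
  by apply/eqP; rewrite eq_le xtight (GNE_sum_le1 i Hx).
have [yslack|ytight] := ltrP (\sum_(l < m) y i l) 1; last first.
  right; apply: (TypeII_of_sum_eq1 HG i Hy).
  by apply/eqP; rewrite eq_le ytight (GNE_sum_le1 i Hy).
case/andP: hi => x0 xy; have y0 := lt_trans x0 xy.
have psi_x := psi_eq0_of_slack HG i Hx j xslack x0.
have psi_y := psi_eq0_of_slack HG i Hy j yslack y0.
have dF_lt0 := derive1_F_lt0 HG i j _ (xT_itv HG i Hx j x0).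
rewrite hxr in psi_x dF_lt0; rewrite hyr in psi_y.
have /(mulIf (ltr0_neq0 dF_lt0)) xy_eq :
    x i j * derive1 (F G i j) r = y i j * derive1 (F G i j) r.
  by apply/(addIr (a_ G i * F G i j r)); rewrite psi_x psi_y.
by move: xy; rewrite xy_eq ltxx.
Qed.
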